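(* Let $n\ge 3$ and let $A=[a_{ij}]$ be a real $n\times n$ matrix with zero diagonal, with LOP objective function $f_A:\Sigma_n\to\mathbb{R}$, $f_A(\sigma)=\sum_{i=1}^{n-1}\sum_{j=i+1}^{n}a_{\sigma(i)\sigma(j)}$. Then $f_A=f_1+f_2$, where $f_1$ is the LOP objective function of a real $n\times n$ zero-diagonal matrix $B=[b_{ij}]$ satisfying $b_{ij}-b_{ji}+b_{jk}-b_{kj}=b_{ik}-b_{ki}$ for all $i,j,k\in\{1,\dots,n\}$ (equivalently $\hat{(f_1)}_{(n-2,1,1)}=0$), and $f_2$ is the LOP objective function of a real $n\times n$ zero-diagonal matrix $C=[c_{ij}]$ satisfying $\sum_{j=1}^n(c_{ij}-c_{ji})=0$ for all $i$ (equivalently $\hat{(f_2)}_{(n-1,1)}=0$).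
   Context: $\Sigma_n$ is the symmetric group on $\{1,\dots,n\}$; a permutation $\sigma$ is written in one-line notation $[\sigma(1)\ \sigma(2)\ \cdots\ \sigma(n)]$, where $\sigma(k)$ is the row/column index of $A$ placed in position $k$. The Linear Ordering Problem (LOP) with input matrix $A$ asks to maximize $f_A$ over $\Sigma_n$. Fourier transform over $\Sigma_n$: for a function $f:\Sigma_n\to\mathbb{R}$ and a partition $\lambda$ of $n$, with $\rho_\lambda$ the irreducible (matrix) representation of $\Sigma_n$ indexed by $\lambda$, the Fourier coefficient is $\hat f_\lambda=\sum_{\sigma\in\Sigma_n}f(\sigma)\rho_\lambda(\sigma)$ (its vanishing does not depend on the choice of basis for $\rho_\lambda$). *)

From mathcomp Require Import all_boot all_order all_algebra all_fingroup.
Set Implicit Arguments. Unset Strict Implicit. Unset Printing Implicit Defensive.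
Import GRing.Theory Num.Theory.
Local Open Scope ring_scope.

(* Indices are 0-based: 'I_n = {0,...,n-1} stands for {1,...,n}.
   A permutation s : 'S_n places row/column index s k of A at position k.
   LOP objective: f_A(s) = sum_{i<j} A (s i) (s j). *)
Definition lop_obj (R : nzRingType) (n : nat) (A : 'M[R]_n) (s : 'S_n) : R :=
  \sum_(i < n) \sum_(j < n | (i < j)%N) A (s i) (s j).

Definition zero_diag (R : nzRingType) (n : nat) (A : 'M[R]_n) : Prop :=
  forall i : 'I_n, A i i = 0.

From mathcomp Require Import all_boot all_order all_algebra all_fingroup.
From mathcomp Require Import ring.
Set Implicit Arguments. Unset Strict Implicit. Unset Printing Implicit Defensive.
Import GRing.Theory Num.Theory.
Local Open Scope ring_scope.

(* Write r_i = sum_j (a_ij - a_ji) for the net flow of A at i; the r_i sum to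
   zero.  The skew part of B is taken to be a gradient, b_ij - b_ji = x_i - x_j
   with x = r / n, which makes the cocycle identity automatic, and this choice
   gives B the same net flow r as A.  Since f_A is linear in A, the remainder
   C = A - B has zero net flow everywhere. *)

Lemma lop_objD (R : nzRingType) (n : nat) (A B : 'M[R]_n) (s : 'S_n) :
  lop_obj (A + B) s = lop_obj A s + lop_obj B s.
Proof.
rewrite /lop_obj -big_split; apply: eq_bigr => i _.
by rewrite -big_split; apply: eq_bigr => j _; rewrite mxE.
Qed.

Definition net_flow (R : zmodType) (n : nat) (A : 'M[R]_n) (i : 'I_n) : R :=
  \sum_(j < n) (A i j - A j i).

Lemma net_flowB (R : zmodType) (n : nat) (A B : 'M[R]_n) (i : 'I_n) :
  net_flow (A - B) i = net_flow A i - net_flow B i.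
Proof.
rewrite /net_flow -sumrB; apply: eq_bigr => j _.
by rewrite !mxE !opprB addrACA [in RHS]addrACA [- B i j - _]addrC.
Qed.

Lemma sum_net_flow (R : zmodType) (n : nat) (A : 'M[R]_n) :
  \sum_(i < n) net_flow A i = 0.
Proof.
rewrite /net_flow; under eq_bigr do rewrite sumrB.
by rewrite sumrB (exchange_big _ _ _ _ _ (fun i j => A j i)) subrr.
Qed.

Section GradientMatrix.

Variables (R : numFieldType) (n : nat).

Definition grad_mx (x : 'I_n -> R) : 'M[R]_n :=
  \matrix_(i, j) ((x i - x j) / 2%:R).

Lemma grad_mx_skew (x : 'I_n -> R) (i j : 'I_n) :
  grad_mx x i j - grad_mx x j i = x i - x j.
Proof. by rewrite !mxE; field. Qed.

Lemma grad_mx_zero_diag (x : 'I_n -> R) : zero_diag (grad_mx x).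
Proof. by move=> i; rewrite mxE subrr mul0r. Qed.

Lemma grad_mx_cocycle (x : 'I_n -> R) (i j k : 'I_n) :
  grad_mx x i j - grad_mx x j i + (grad_mx x j k - grad_mx x k j)
  = grad_mx x i k - grad_mx x k i.
Proof. by rewrite !grad_mx_skew addrA subrK. Qed.

Lemma net_flow_grad_mx (x : 'I_n -> R) (i : 'I_n) :
  net_flow (grad_mx x) i = n%:R * x i - \sum_(j < n) x j.
Proof.
rewrite /net_flow; under eq_bigr do rewrite grad_mx_skew.
by rewrite sumrB sumr_const card_ord mulr_natl.
Qed.

Lemma net_flow_grad_mx_balanced (r : 'I_n -> R) :
  (0 < n)%N -> \sum_(i < n) r i = 0 ->
  forall i, net_flow (grad_mx (fun j => r j / n%:R)) i = r i.
Proof.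
move=> n_gt0 sum_r0 i; have n_neq0 : n%:R != 0 :> R by rewrite pnatr_eq0 -lt0n.
by rewrite net_flow_grad_mx -mulr_suml sum_r0 mul0r subr0 mulrC divfK.
Qed.

End GradientMatrix.

Theorem mainTheorem1 (R : realFieldType) (n : nat) (A : 'M[R]_n) :
  (3 <= n)%N -> zero_diag A ->
  exists B C : 'M[R]_n,
    [/\ zero_diag B,
        (forall i j k : 'I_n, B i j - B j i + (B j k - B k j) = B i k - B k i),
        zero_diag C,
        (forall i : 'I_n, \sum_(j < n) (C i j - C j i) = 0) &
        (forall s : 'S_n, lop_obj A s = lop_obj B s + lop_obj C s)].
Proof.
move=> n_ge3 zA; have n_gt0 : (0 < n)%N by apply: leq_trans n_ge3.
pose B := grad_mx (fun j => net_flow A j / n%:R).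
exists B, (A - B); split.
- exact: grad_mx_zero_diag.
- exact: grad_mx_cocycle.
- by move=> i; rewrite !mxE zA subrr mul0r subr0.
- move=> i; rewrite -[LHS]/(net_flow (A - B) i) net_flowB.
  by rewrite net_flow_grad_mx_balanced ?sum_net_flow ?subrr.
- by move=> s; rewrite -lop_objD addrC subrK.
Qed.
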